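(* Let $k$ and $q$ be natural numbers. If $G$ is a graph containing $4kq$ pairwise edge-disjoint spanning trees, then $G$ has a spanning $q$-edge-connected subgraph $H$ such that $d(v,H) < d(v,G)/k$ for every $v\in V(G)$.
   Context: All graphs are finite and loopless but may have multiple edges. $d(v,H)$ denotes the degree of vertex $v$ in graph $H$. *)

(* A finite loopless multigraph is given by a finite vertex
   type V, a finite edge type E and the two endpoints src e, tgt e of each
   edge (with src e != tgt e).  Spanning subgraphs are sets of edges. *)
From mathcomp Require Import all_boot all_order all_algebra.
Set Implicit Arguments. Unset Strict Implicit. Unset Printing Implicit Defensive.

Section MultiGraph.
Variables (V E : finType) (src tgt : E -> V).

Definition loopless := forall e, src e != tgt e.

Definition adj (F : {set E}) : rel V := fun x y =>
  [exists e in F, ((src e == x) && (tgt e == y)) || ((src e == y) && (tgt e == x))].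

Definition connectedF (F : {set E}) := forall x y : V, connect (adj F) x y.

(* acyclic: no cycle, i.e. no edge of F lies on a cycle: its endpoints are
   disconnected once it is removed (this also excludes parallel edges) *)
Definition acyclicF (F : {set E}) :=
  forall e, e \in F -> ~~ connect (adj (F :\ e)) (src e) (tgt e).

Definition spanning_tree (F : {set E}) := connectedF F /\ acyclicF F.

Definition edge_connected (q : nat) (F : {set E}) :=
  forall S : {set E}, #|S| < q -> connectedF (F :\: S).

(* degree of v in (V, F); loopless, so each incident edge counts once *)
Definition deg (F : {set E}) (v : V) : nat :=
  #|[set e in F | (src e == v) || (tgt e == v)]|.
End MultiGraph.

(* Split the 4kq trees into q groups of 4k trees and let U be the union of a group.  Take
   a forest F in U which is maximum subject to d(v,F) <= f v := (d(v,U) - 1) / k; then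
   k d(v,F) < d(v,U), and it suffices to show that F is connected.  Starting from the set
   of saturated vertices, we shrink a set S of saturated vertices, keeping the invariant
   that every vertex outside S can be unsaturated by a maximum such forest differing from
   F only inside its component of F - S.  If an edge g of U joins two such components,
   splicing the forests of its ends gives a maximum forest in which g closes a cycle
   through S, and trading a cycle edge at s in S for g unsaturates s.  When no such edge is
   left, each of the 4k trees has many edges at S, which contradicts saturation by a
   counting argument.  The q connected subgraphs obtained are edge-disjoint, so their union
   is q-edge-connected, and its degrees add up to less than d(v,G)/k. *)

From mathcomp Require Import all_boot all_order all_algebra zify.
Set Implicit Arguments. Unset Strict Implicit. Unset Printing Implicit Defensive.
Import Order.TTheory GRing.Theory Num.Theory.

Lemma set_ind (T : finType) (P : {set T} -> Prop) :
  P set0 -> (forall x (A : {set T}), x \notin A -> P A -> P (x |: A)) -> forall A, P A.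
Proof.
move=> P0 PU A; have [n] := ubnP #|A|; elim: n A => // n IH A.
have [->|[x xA]] := set_0Vmem A; first by [].
rewrite ltnS (cardsD1 x A) xA => ltA.
by rewrite -(setD1K xA); apply: PU (IH _ ltA); rewrite setD11.
Qed.

Lemma card_sum_mem (T : finType) (X : {set T}) : #|X| = \sum_x (x \in X).
Proof. by rewrite -sum1_card big_mkcond /=; apply: eq_bigr => x _; case: (x \in X). Qed.

Lemma sum_card_disjoint (I T : finType) (A : I -> {set T}) (B : {set T}) :
  (forall i, A i \subset B) -> (forall i j, i != j -> [disjoint A i & A j]) ->
  \sum_i #|A i| <= #|B|.
Proof.
move=> sA dA; under eq_bigr do rewrite card_sum_mem.
rewrite exchange_big card_sum_mem; apply: leq_sum => x _ /=.
have [i xi|] := pickP (fun i => x \in A i); last first.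
  by move=> h; rewrite big1 // => i _; rewrite h.
rewrite (bigD1 i) //= xi (subsetP (sA i) x xi) /= big1 ?addn0 // => j ji.
by rewrite (disjointFl (dA _ _ ji) xi).
Qed.

Lemma mxvec_index_eq m n (i i' : 'I_m) (j j' : 'I_n) :
  (mxvec_index i j == mxvec_index i' j') = ((i, j) == (i', j')).
Proof. by apply/eqP/eqP => [/cast_ord_inj/enum_rank_inj|[-> ->]]. Qed.

Lemma disjoint_bigcup_mxvec (T : finType) m n (A : 'I_(m * n) -> {set T}) :
  (forall i j, i != j -> [disjoint A i & A j]) -> forall j j', j != j' ->
  [disjoint \bigcup_(i < m) A (mxvec_index i j) & \bigcup_(i < m) A (mxvec_index i j')].
Proof.
move=> dA j j' jj'; rewrite -setI_eq0; apply/eqP/setP => x; rewrite !inE.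
apply/andP => -[/bigcupP[i _ xi] /bigcupP[i' _ xi']].
have /dA dii' : mxvec_index i j != mxvec_index i' j'.
  by rewrite mxvec_index_eq xpair_eqE (negbTE jj') andbF.
by rewrite (disjointFr dii' xi) in xi'.
Qed.

Section MultiGraph.
Variables (V E : finType) (src tgt : E -> V).
Implicit Types (A B F K U : {set E}) (e g : E) (M P S W : {set V}).

Local Notation conn F := (connect (adj src tgt F)).
Local Notation acyclic := (acyclicF src tgt).
Local Notation deg := (deg src tgt).

Definition incident e v := (src e == v) || (tgt e == v).

Lemma adjP F x y : reflect (exists2 e, e \in F &
   ((src e == x) && (tgt e == y)) || ((src e == y) && (tgt e == x))) (adj src tgt F x y).
Proof.
apply: (iffP existsP) => [[e /andP[eF h]]|[e eF h]]; exists e => //.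
by rewrite eF.
Qed.

Lemma conn_sym F : connect_sym (adj src tgt F).
Proof.
apply: sym_connect_sym => x y.
by apply/adjP/adjP => [][e eF h]; exists e => //; rewrite orbC.
Qed.

Lemma conn_edge A e : e \in A -> conn A (src e) (tgt e).
Proof. by move=> eA; apply: connect1; apply/adjP; exists e; rewrite ?eqxx. Qed.

Lemma conn_edges A B : {in A, forall e, conn B (src e) (tgt e)} ->
  forall x y, conn A x y -> conn B x y.
Proof.
move=> h x y; apply: connect_sub => u w /adjP [e eA /orP[]/andP[/eqP<- /eqP<-]].
  exact: h.
by rewrite conn_sym; exact: h.
Qed.

Lemma conn_subset A B : A \subset B -> forall x y, conn A x y -> conn B x y.
Proof. by move=> sAB; apply: conn_edges => e eA; apply/conn_edge/(subsetP sAB). Qed.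

Lemma conn_isolated A v y : {in A, forall e, ~~ incident e v} -> conn A v y -> y = v.
Proof.
move=> h /connectP [[|w p] /= pth ->] //.
case/andP: pth => /adjP [e eA /orP[]/andP[/eqP ev1 /eqP ev2]];
  by have := h e eA; rewrite /incident ev1 ev2 eqxx ?orbT.
Qed.

Definition component F x := [set y | conn F x y].
Definition ncomp F := #|[set component F x | x : V]|.

Lemma component_refl F x : x \in component F x.
Proof. by rewrite inE connect0. Qed.

Lemma component_eq F x y : conn F x y -> component F x = component F y.
Proof.
move=> c; apply/setP => z; rewrite !inE; apply/idP/idP => h; last exact: connect_trans c h.
by apply: connect_trans h; rewrite conn_sym.
Qed.

Lemma component_disjoint F x y : ~~ conn F x y -> [disjoint component F x & component F y].
Proof.
move=> nxy; rewrite -setI_eq0; apply/eqP/setP => z; rewrite !inE.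
by apply/negP => /andP[h1 h2]; move: nxy; rewrite (connect_trans h1) // conn_sym.
Qed.

Lemma eq_ncomp A B : conn A =2 conn B -> ncomp A = ncomp B.
Proof.
move=> h; rewrite /ncomp; congr #|pred_of_set _|.
by apply: eq_imset => x; apply/setP => y; rewrite !inE h.
Qed.

Lemma leq_ncomp A B : (forall x y, conn A x y -> conn B x y) -> ncomp B <= ncomp A.
Proof.
move=> h; rewrite /ncomp.
pose g (C : {set V}) := [set y | [exists z in C, conn B z y]].
have -> : [set component B x | x : V] = [set g C | C in [set component A x | x : V]].
  rewrite -imset_comp; apply: eq_imset => x /=; apply/setP => y; rewrite !inE.
  apply/idP/existsP => [c|[z /andP[]]]; first by exists x; rewrite component_refl.
  by rewrite inE => /h; apply: connect_trans.
exact: leq_imset_card.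
Qed.

Lemma ncomp0 : ncomp set0 = #|V|.
Proof.
rewrite /ncomp -[RHS](card_imset _ (@set1_inj V)); congr #|pred_of_set _|.
apply: eq_imset => x; apply/setP => y; rewrite !inE.
apply/idP/eqP => [|->]; last exact: connect0.
by move/conn_isolated => -> // e; rewrite inE.
Qed.

Lemma ncomp_connected A : connectedF src tgt A -> 0 < #|V| -> ncomp A = 1.
Proof.
move=> cA /card_gt0P [x0 _]; apply/eqP/cards1P; exists (component A x0).
apply/setP => C; rewrite !inE; apply/imsetP/eqP => [[x _ ->]|->]; last by exists x0.
by apply: component_eq; rewrite conn_sym; apply: cA.
Qed.

Lemma ncomp_ge2 A x y : ~~ conn A x y -> 2 <= ncomp A.
Proof.
move=> nxy; rewrite /ncomp.
have ne : component A x != component A y.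
  by apply: contra nxy => /eqP h; have := component_refl A y; rewrite -h inE.
have <- : #|[set component A x; component A y]| = 2 by rewrite cards2 ne.
apply: subset_leq_card.
by apply/subsetP => C; rewrite !inE => /orP[]/eqP ->; apply: imset_f.
Qed.

Section DeleteEdge.
Variables (A : {set E}) (e : E).
Hypothesis eA : e \in A.
Let B := A :\ e.
Let a := src e.
Let b := tgt e.

Lemma conn_delete_nonbridge : conn B a b -> conn A =2 conn B.
Proof.
move=> cab x y; apply/idP/idP; last exact/conn_subset/subD1set.
apply: conn_edges => g gA; case: (g =P e) => [->|/eqP ne] //.
by apply: conn_edge; rewrite !inE ne.
Qed.

Lemma conn_delete_bridge : ~~ conn B a b -> forall x y, conn A x y =
  conn B x y || ((conn B x a || conn B x b) && (conn B y a || conn B y b)).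
Proof.
move=> nab x y; apply/idP/idP.
  pose Q := [pred y | conn B x y ||
    ((conn B x a || conn B x b) && (conn B y a || conn B y b))].
  have cQ : closed (adj src tgt A) Q.
    move=> u w /adjP [g gA hg]; case: (g =P e) => [gE|/eqP ne].
      subst g; rewrite !inE.
      case/orP: hg => /andP[/eqP <- /eqP <-]; rewrite -/a -/b !connect0 /= ?orbT ?andbT;
        by case: (conn B x a); case: (conn B x b).
    have cuw : conn B u w.
      have gB : g \in B by rewrite !inE ne.
      by case/orP: hg => /andP[/eqP <- /eqP <-]; [|rewrite conn_sym]; apply: conn_edge.
    have e2 z : conn B u z = conn B w z.
      by apply/idP/idP; apply: connect_trans; rewrite // conn_sym.
    by rewrite !inE (same_connect_r (conn_sym B) cuw) e2 (e2 b).
  by move=> c; have := closed_connect cQ c; rewrite !inE connect0 => <-.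
case/orP => [|/andP[h1 h2]]; first exact/conn_subset/subD1set.
have sBA : B \subset A by apply: subD1set.
have cba : conn A b a by rewrite conn_sym conn_edge.
have hx : conn A x a.
  by case/orP: h1 => /(conn_subset sBA) h //; apply: connect_trans h cba.
have hy : conn A a y.
  by rewrite conn_sym; case/orP: h2 => /(conn_subset sBA) h //; apply: connect_trans h cba.
exact: connect_trans hx hy.
Qed.

Lemma component_delete_bridge : ~~ conn B a b -> forall x, component A x =
  if conn B x a || conn B x b then component B a :|: component B b else component B x.
Proof.
move=> nab x; apply/setP => y; rewrite !inE (conn_delete_bridge nab).
case: ifP => hx /=; last by rewrite orbF inE.
rewrite !inE ![conn B _ y]conn_sym.
apply/idP/idP => [/orP[cyx|//]|h]; last by rewrite h orbT.
by case/orP: hx => h; rewrite (connect_trans cyx h) ?orbT.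
Qed.

Lemma ncomp_delete : if conn B a b then ncomp A = ncomp B else (ncomp A).+1 = ncomp B.
Proof.
case: ifP => [cab|/negbT nab]; first exact: eq_ncomp (conn_delete_nonbridge cab).
set I := [set component B x | x : V].
set ca := component B a; set cb := component B b.
have compA := component_delete_bridge nab.
have eqI : [set component A x | x : V] = (ca :|: cb) |: (I :\ ca :\ cb).
  apply/setP => C; rewrite !inE; apply/imsetP/idP.
    case=> x _ ->; rewrite compA; case: ifP => hx; first by rewrite eqxx.
    have nxa : component B x != ca.
      apply: contraFN hx => /eqP h; have := component_refl B x.
      by rewrite h inE conn_sym => ->.
    have nxb : component B x != cb.
      apply: contraFN hx => /eqP h; have := component_refl B x.
      by rewrite h inE conn_sym => ->; rewrite orbT.
    by rewrite nxa nxb /=; apply/orP; right; apply/imsetP; exists x.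
  case/orP => [/eqP ->|/andP[nb /andP[na /imsetP[x _ Cx]]]].
    by exists a => //; rewrite compA connect0.
  subst C; exists x => //; rewrite compA; case: ifP => // /orP[h|h].
    by move: na; rewrite (component_eq h) -/ca eqxx.
  by move: nb; rewrite (component_eq h) -/cb eqxx.
have nU : (ca :|: cb) \notin I :\ ca :\ cb.
  apply/negP => /setD1P [_ /setD1P [_ /imsetP [z _ hz]]].
  have za : conn B z a.
    have : a \in ca :|: cb by rewrite !inE connect0.
    by rewrite hz inE.
  have : b \in ca :|: cb by rewrite !inE connect0 orbT.
  by rewrite hz (component_eq za) inE (negbTE nab).
have caI : ca \in I by apply: imset_f.
have cbI : cb \in I :\ ca.
  rewrite !inE imset_f // andbT; apply/negP => /eqP h.
  by have := component_refl B b; rewrite -/cb h inE (negbTE nab).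
by rewrite /ncomp eqI cardsU1 nU (cardsD1 ca I) (cardsD1 cb (I :\ ca)) caI cbI.
Qed.

Lemma conn_delete_split x y : conn A x y -> ~~ conn B x y ->
  (conn B x a && conn B y b) || (conn B x b && conn B y a).
Proof.
move=> cxy nxy; have [cab|nab] := boolP (conn B a b).
  by move: nxy; rewrite -(conn_delete_nonbridge cab) cxy.
move: cxy; rewrite (conn_delete_bridge nab) (negbTE nxy) /=.
case/andP => /orP[xa|xb] /orP[ya|yb]; rewrite ?xa ?xb ?ya ?yb ?orbT //.
- by case/negP: nxy; apply: connect_trans xa _; rewrite conn_sym.
- by case/negP: nxy; apply: connect_trans xb _; rewrite conn_sym.
Qed.

End DeleteEdge.

Lemma card_edges_ncomp A : #|V| <= #|A| + ncomp A.
Proof.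
elim/set_ind: A => [|e A eA IH]; first by rewrite cards0 ncomp0.
have := ncomp_delete (setU11 e A); rewrite setU1K // cardsU1 eA.
by case: ifP => _ h; lia.
Qed.

Lemma acyclicS A B : A \subset B -> acyclic B -> acyclic A.
Proof.
move=> sAB acB e eA; apply: contra (acB e (subsetP sAB e eA)).
by apply: conn_subset; apply: setSD.
Qed.

Lemma forest_card_ncomp A : acyclic A -> #|A| + ncomp A = #|V|.
Proof.
elim/set_ind: A => [|e A eA IH acA]; first by rewrite cards0 ncomp0.
have := ncomp_delete (setU11 e A); have := acA e (setU11 e A).
rewrite setU1K // => /negbTE ->.
have := IH (acyclicS (subsetUr _ _) acA); rewrite cardsU1 eA; lia.
Qed.

Lemma card_ncomp_acyclic A : #|A| + ncomp A = #|V| -> acyclic A.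
Proof.
move=> h e eA; apply/negP => c.
have := ncomp_delete eA; rewrite c => hn.
by have := card_edges_ncomp (A :\ e); move: h; rewrite (cardsD1 e A) eA hn; lia.
Qed.

Definition induced P := [set e | (src e \in P) && (tgt e \in P)].
Definition touching S := [set e | (src e \in S) || (tgt e \in S)].

Lemma inducedS P W : P \subset W -> induced P \subset induced W.
Proof.
move=> sPW; apply/subsetP => e; rewrite !inE => /andP[h1 h2].
by rewrite (subsetP sPW _ h1) (subsetP sPW _ h2).
Qed.

Lemma incident_notin_induced e w P : incident e w -> w \notin P -> e \notin induced P.
Proof. by rewrite inE => /orP[]/eqP-> wP; rewrite negb_and wP ?orbT. Qed.

Lemma conn_in_component A u w : conn A u w -> conn (A :&: induced (component A u)) u w.
Proof.
move=> cuw.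
pose Q := [pred y | conn (A :&: induced (component A u)) u y].
have cQ : closed (adj src tgt A) Q.
  move=> y z /adjP [g gA hg]; rewrite !inE.
  have cyz : conn A y z.
    by case/orP: hg => /andP[/eqP <- /eqP <-]; [|rewrite conn_sym]; apply: conn_edge.
  have [uy|nuy] := boolP (conn A u y).
    have uz : conn A u z by apply: connect_trans uy cyz.
    have gI : g \in A :&: induced (component A u).
      by rewrite !inE gA; case/orP: hg => /andP[/eqP -> /eqP ->]; rewrite uy uz.
    have cyz' : conn (A :&: induced (component A u)) y z.
      by case/orP: hg => /andP[/eqP <- /eqP <-]; [|rewrite conn_sym]; apply: conn_edge.
    by rewrite (same_connect_r (conn_sym _) cyz').
  have nuz : ~~ conn A u z.
    by apply: contra nuy => uz; apply: connect_trans uz _; rewrite conn_sym.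
  have sI : A :&: induced (component A u) \subset A by apply: subsetIl.
  by apply/idP/idP => /(conn_subset sI); rewrite ?(negbTE nuy) ?(negbTE nuz).
by have := closed_connect cQ cuw; rewrite !inE connect0 => <-.
Qed.

Lemma ncomp_induced A W w0 : w0 \in W -> A \subset induced W -> #|~: W| + 1 <= ncomp A.
Proof.
move=> w0W sA; rewrite /ncomp.
have compv v : v \notin W -> component A v = [set v].
  move=> vW; apply/setP => y; rewrite !inE; apply/idP/eqP => [|->]; last exact: connect0.
  move/conn_isolated => -> // e /(subsetP sA).
  by apply: contraL => /incident_notin_induced; apply.
have sub : component A w0 |: [set [set v] | v in ~: W] \subset [set component A x | x : V].
  apply/subsetP => C; rewrite !inE => /orP[/eqP->|/imsetP[v]]; first exact: imset_f.
  by rewrite inE => vW ->; rewrite -compv // imset_f.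
apply: leq_trans (subset_leq_card sub).
rewrite cardsU1 card_imset; last exact: set1_inj.
have -> : component A w0 \notin [set [set v] | v in ~: W].
  apply/imsetP => [][v]; rewrite inE => vW h.
  by have := component_refl A w0; rewrite h inE => /eqP ew; move: vW; rewrite -ew w0W.
by rewrite addnC.
Qed.

Lemma degE A v : deg A v = \sum_e ((e \in A) && incident e v).
Proof. by rewrite /deg card_sum_mem; apply: eq_bigr => e _; rewrite inE. Qed.

Lemma eq_deg A B v : {in incident^~ v, A =i B} -> deg A v = deg B v.
Proof.
move=> h; rewrite !degE; apply: eq_bigr => e _.
by case iev: (incident e v); rewrite ?andbF // h.
Qed.

Lemma degEI A v : deg A v = #|A :&: [set e | incident e v]|.
Proof. by apply: eq_card => e; rewrite !inE. Qed.

Lemma deg_subset A B v : A \subset B -> deg A v <= deg B v.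
Proof. by move=> sAB; rewrite !degEI; apply/subset_leq_card/setSI. Qed.

Lemma degD1 A e v : e \in A -> deg A v = incident e v + deg (A :\ e) v.
Proof.
move=> eA; rewrite !degE (bigD1 e) //= eA /=; congr (_ + _).
rewrite [RHS](bigD1 e) //= !inE eqxx /= add0n.
by apply: eq_bigr => g ng; rewrite !inE ng.
Qed.

Lemma degU1 A g v : g \notin A -> deg (g |: A) v = incident g v + deg A v.
Proof. by move=> gA; rewrite (degD1 v (setU11 g A)) setU1K. Qed.

Lemma sum_deg_disjoint (I : finType) (T : I -> {set E}) U v :
  (forall i, T i \subset U) -> (forall i j, i != j -> [disjoint T i & T j]) ->
  \sum_i deg (T i) v <= deg U v.
Proof.
move=> sT dT; under eq_bigr do rewrite degEI.
rewrite degEI; apply: sum_card_disjoint => [i|i j ij]; first exact/setSI.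
by apply: disjointWl (subsetIl _ _) _; apply: disjointWr (subsetIl _ _) _; apply: dT.
Qed.

Lemma deg_bigcup (I : finType) (C : I -> {set E}) v :
  deg (\bigcup_i C i) v <= \sum_i deg (C i) v.
Proof.
under [X in _ <= X]eq_bigr do rewrite degE.
rewrite degE exchange_big /=; apply: leq_sum => e _.
have [/bigcupP[i _ ei]|] := boolP (e \in \bigcup_i C i) => //=.
by rewrite (bigD1 i) //= ei /=; case: (incident e v).
Qed.

Lemma deg_connected_gt0 A v : connectedF src tgt A -> 1 < #|V| -> 0 < deg A v.
Proof.
move=> cA /card_gt1P [w1 [w2 [_ _ w12]]].
have [w wv] : exists w, w != v.
  by case: (w1 =P v) => [e1|/eqP]; [exists w2; rewrite -e1 eq_sym | exists w1].
have := cA v w; move/connectP => [[|u p] /= pth lst].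
  by move: wv; rewrite lst eqxx.
case/andP: pth => /adjP [e eA he] _.
rewrite degE (bigD1 e) //= eA /incident.
by case/orP: he => /andP[/eqP -> /eqP ->]; rewrite eqxx ?orbT.
Qed.

Lemma acyclic_eq_conn A K : acyclic K -> #|A| = #|K| -> conn A =2 conn K -> acyclic A.
Proof.
move=> acK cardA cAK; apply: card_ncomp_acyclic.
by rewrite cardA (eq_ncomp cAK) forest_card_ncomp.
Qed.

Lemma conn_reroute A B e x y : e \in A -> conn A x y -> ~~ conn (A :\ e) x y ->
  A :\ e \subset B -> conn B x y -> conn B (src e) (tgt e).
Proof.
move=> eA cxy nxy sB cB.
case/orP: (conn_delete_split eA cxy nxy) => /andP[/(conn_subset sB) h1 /(conn_subset sB) h2].
  by rewrite conn_sym in h1; apply: connect_trans (connect_trans h1 cB) h2.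
by rewrite conn_sym in h2; rewrite conn_sym in cB; apply: connect_trans (connect_trans h2 cB) h1.
Qed.

Lemma conn_exchange K e g : e \in K -> conn K (src g) (tgt g) ->
  ~~ conn (K :\ e) (src g) (tgt g) -> conn (g |: (K :\ e)) =2 conn K.
Proof.
move=> eK cK nKe; have sKe : K :\ e \subset g |: (K :\ e) by apply: subsetUr.
have cg : conn (g |: (K :\ e)) (src g) (tgt g) by apply/conn_edge/setU11.
move=> a b; apply/idP/idP; apply: conn_edges => h.
  case/setU1P => [->|/setD1P[_ hK]] //; exact: conn_edge.
case: (h =P e) => [-> _|/eqP he hK]; first exact: conn_reroute eK cK nKe sKe cg.
by apply/conn_edge/(subsetP sKe); rewrite !inE he.
Qed.

Lemma conn_remove_nonbridges A B x y : acyclic A -> B \subset A ->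
  {in B, forall e, conn (A :\ e) x y} -> conn A x y -> conn (A :\: B) x y.
Proof.
move=> acA; elim/set_ind: B => [|e B eB IH]; first by rewrite setD0.
rewrite subUset sub1set => /andP[eA sBA] hB cxy.
have cB : conn (A :\: B) x y by apply: IH => // h hB'; apply/hB/setU1r.
have eAB : e \in A :\: B by rewrite !inE eA eB.
have -> : A :\: (e |: B) = (A :\: B) :\ e by apply/setP => h; rewrite !inE negb_or andbA.
have [//|nxy] := boolP (conn _ x y).
have sub : (A :\: B) :\ e \subset A :\ e by apply/setSD/subsetDl.
by case/negP: (acA e eA); apply: conn_reroute eAB cB nxy sub (hB e (setU11 e B)).
Qed.

Definition agree_off A B (X : {set E}) := forall e, e \notin X -> (e \in A) = (e \in B).
Definition connected_in A P := {in P &, forall u w, conn (A :&: induced P) u w}.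

Lemma card_agree_off A B X : agree_off A B X -> #|A| + #|B :&: X| = #|B| + #|A :&: X|.
Proof.
move=> h; rewrite -(cardsID X A) -(cardsID X B).
have -> : A :\: X = B :\: X.
  by apply/setP => e; rewrite !inE; case eX: (e \in X) => //=; rewrite h ?eX.
lia.
Qed.

Lemma connected_in_component A B v : B \subset A -> connected_in A (component B v).
Proof.
move=> sBA u w; rewrite !inE => vu vw.
have uw : conn B u w by apply: connect_trans vw; rewrite conn_sym.
have := conn_in_component uw; rewrite -(component_eq vu).
by apply: conn_subset; apply: setSI.
Qed.

Lemma connected_in_conn A P u w : connected_in A P -> u \in P -> w \in P -> conn A u w.
Proof. by move=> h uP wP; apply: conn_subset (h u w uP wP); apply: subsetIl. Qed.

Lemma connected_in_D1 A P e :
  e \notin induced P -> connected_in A P -> connected_in (A :\ e) P.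
Proof.
move=> eP h u w uP wP; have -> : (A :\ e) :&: induced P = A :&: induced P.
  apply/setP => g; rewrite !in_setI in_setD1.
  by case: (g =P e) => [->|]; rewrite ?(negbTE eP) ?andbF.
exact: h.
Qed.

Lemma conn_agree_off A B P1 P2 : agree_off A B (induced P1 :|: induced P2) ->
  connected_in A P1 -> connected_in A P2 -> forall x y, conn B x y -> conn A x y.
Proof.
move=> ag c1 c2; apply: conn_edges => e eB.
case e1: (e \in induced P1).
  by move: e1; rewrite inE => /andP[]; apply: connected_in_conn c1.
case e2: (e \in induced P2).
  by move: e2; rewrite inE => /andP[]; apply: connected_in_conn c2.
by apply: conn_edge; rewrite ag // in_setU e1 e2.
Qed.

Lemma conn_swap A B P1 P2 : agree_off A B (induced P1 :|: induced P2) ->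
  connected_in A P1 -> connected_in A P2 -> connected_in B P1 -> connected_in B P2 ->
  conn A =2 conn B.
Proof.
move=> ag cA1 cA2 cB1 cB2 a b; apply/idP/idP; last exact: conn_agree_off ag cA1 cA2 a b.
by apply: conn_agree_off cB1 cB2 a b => e he; rewrite ag.
Qed.

Lemma connected_in_induced A P M :
  P \subset M -> connected_in A P -> connected_in (A :&: induced M) P.
Proof. by move=> sPM cA; rewrite /connected_in -setIA (setIidPr (inducedS sPM)). Qed.

Section Loopless.
Hypothesis loopless_st : loopless src tgt.

Lemma sum_deg A S :
  \sum_(v in S) deg A v = \sum_e ((e \in A) * ((src e \in S) + (tgt e \in S))).
Proof.
under eq_bigr do rewrite degE.
rewrite exchange_big /=; apply: eq_bigr => e _.
case: (e \in A); rewrite ?mul0n ?mul1n /=; last by rewrite big1.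
have incD w : incident e w = (src e == w) + (tgt e == w) :> nat.
  rewrite /incident; case: (src e =P w) => [<-|] //.
  by have := loopless_st e; rewrite eq_sym => /negbTE ->.
under eq_bigr do rewrite incD.
rewrite big_split /=.
have one w : \sum_(v in S) (w == v) = (w \in S).
  have [wS|wS] := boolP (w \in S); last first.
    by rewrite big1 // => v vS; apply/eqP; rewrite eqb0; apply: contraNneq wS => ->.
  rewrite (bigD1 w) //= eqxx big1 // => v /andP[_].
  by rewrite eq_sym => /negbTE ->.
by rewrite !one.
Qed.

Lemma sum_deg_le A S :
  \sum_(v in S) deg A v <= #|A :&: touching S| + #|A :&: induced S|.
Proof.
rewrite sum_deg !card_sum_mem -big_split /=; apply: leq_sum => e _.
by rewrite !inE; case: (e \in A); case: (src e \in S); case: (tgt e \in S).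
Qed.

Lemma sum_deg_ge A S : #|A :&: touching S| <= \sum_(v in S) deg A v.
Proof.
rewrite sum_deg !card_sum_mem; apply: leq_sum => e _.
by rewrite !inE; case: (e \in A); case: (src e \in S); case: (tgt e \in S).
Qed.

End Loopless.

Section BoundedForest.
Variables (U : {set E}) (f : V -> nat) (F : {set E}).

Definition bounded_forest A := [/\ A \subset U, acyclic A & forall v, deg A v <= f v].

Hypothesis FF : bounded_forest F.
Hypothesis Fmax : forall A, bounded_forest A -> #|A| <= #|F|.

Definition F_off S := F :\: touching S.
Definition block S v := component (F_off S) v.

Definition witness S v A := [/\ bounded_forest A, #|A| = #|F|,
  agree_off A F (induced (block S v)), connected_in A (block S v) & deg A v < f v].

Definition admissible S := (forall s, s \in S -> f s <= deg F s) /\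
  forall v, v \notin S -> exists A, witness S v A.

Definition blocks_closed S := forall g, g \in U -> src g \notin S -> tgt g \notin S ->
  conn (F_off S) (src g) (tgt g).

Lemma F_off_sub S : F_off S \subset F. Proof. exact: subsetDl. Qed.

Lemma F_offS S S' : S' \subset S -> F_off S \subset F_off S'.
Proof.
move=> sS; apply/subsetP => e; rewrite !inE => /andP[h ->]; rewrite andbT.
by apply: contra h => /orP[]h; rewrite (subsetP sS _ h) ?orbT.
Qed.

Lemma blockS S S' v : S' \subset S -> block S v \subset block S' v.
Proof. by move=> sS; apply/subsetP => y; rewrite !inE; apply/conn_subset/F_offS. Qed.

Lemma block_avoid S v s : v \notin S -> s \in S -> s \notin block S v.
Proof.
move=> vS sS; rewrite inE conn_sym; apply: contra vS => /conn_isolated -> //.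
move=> e; rewrite !inE negb_or /incident => /andP[/andP[h1 h2] _].
by apply/negP => /orP[]/eqP ev; [move: h1|move: h2]; rewrite ev sS.
Qed.

Lemma induced_block_avoid S v e : v \notin S -> e \in induced (block S v) -> e \notin touching S.
Proof.
move=> vS; rewrite [e \in induced _]inE [e \in touching _]inE negb_or => /andP[h1 h2].
by rewrite (contraTN (block_avoid vS) h1) (contraTN (block_avoid vS) h2).
Qed.

Lemma admissible_saturated : admissible [set v | f v <= deg F v].
Proof.
split => [s|v]; first by rewrite inE.
rewrite inE -ltnNge => lt; exists F; split => //.
exact/connected_in_component/F_off_sub.
Qed.

Lemma witnessS S S' v A : S' \subset S -> witness S v A -> witness S' v A.
Proof.
move=> sS [fA cA ag ci dA]; have sI := inducedS (blockS v sS).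
split => //; first by move=> e ne; apply: ag; apply: contra ne; apply: (subsetP sI).
move=> u w uP wP; have sP := blockS v sS.
have cF := connected_in_component (F_off_sub S') uP wP.
apply: (conn_agree_off (P1 := block S v) (P2 := block S v) _ _ _ cF).
- by move=> e; rewrite setUid => eS; rewrite !in_setI ag.
- exact: connected_in_induced sP ci.
exact: connected_in_induced sP ci.
Qed.

Section BadEdge.
Variables (S : {set V}) (g : E) (Ax Ay : {set E}).
Hypotheses (admS : admissible S) (gU : g \in U).
Local Notation x := (src g).
Local Notation y := (tgt g).
Hypotheses (xS : x \notin S) (yS : y \notin S) (nxy : ~~ conn (F_off S) x y).
Hypotheses (wx : witness S x Ax) (wy : witness S y Ay).

Let P1 := block S x.
Let P2 := block S y.
(* Splicing the two witnesses gives a maximum bounded forest with the components of F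
   in which both ends of g are unsaturated. *)
Let K := (Ax :\: induced P2) :|: (Ay :&: induced P2).

Let disjoint_blocks : [disjoint P1 & P2]. Proof. exact: component_disjoint. Qed.

Let induced_block1 e : e \in induced P1 -> e \notin induced P2.
Proof.
by rewrite [e \in induced P1]inE => /andP[h1 _]; rewrite inE (disjointFr disjoint_blocks h1).
Qed.

Let K_mem e : (e \in K) = if e \in induced P2 then e \in Ay else e \in Ax.
Proof.
by rewrite in_setU in_setD in_setI; case: (e \in induced P2); rewrite /= ?andbT ?andbF ?orbF.
Qed.

Let agree_off_K : agree_off K F (induced P1 :|: induced P2).
Proof.
case: wx => _ _ agx _ _ e; rewrite in_setU negb_or => /andP[n1 n2].
by rewrite K_mem (negbTE n2) agx.
Qed.

Let connected_in_K1 : connected_in K P1.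
Proof.
case: wx => _ _ _ cix _; rewrite /connected_in.
suff -> : K :&: induced P1 = Ax :&: induced P1 by [].
apply/setP => e; rewrite !in_setI K_mem.
by case e1: (e \in induced P1); rewrite ?andbF // (negbTE (induced_block1 e1)).
Qed.

Let connected_in_K2 : connected_in K P2.
Proof.
case: wy => _ _ _ ciy _; rewrite /connected_in.
suff -> : K :&: induced P2 = Ay :&: induced P2 by [].
by apply/setP => e; rewrite !in_setI K_mem; case: (e \in induced P2); rewrite ?andbF.
Qed.

Let conn_K : conn K =2 conn F.
Proof.
by apply: conn_swap agree_off_K connected_in_K1 connected_in_K2 _ _;
  apply/connected_in_component/F_off_sub.
Qed.

Let deg_K w : deg K w =
  if w \in P1 then deg Ax w else if w \in P2 then deg Ay w else deg F w.
Proof.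
case: wx wy => _ _ agx _ _ [_ _ agy _ _].
have [w1|w1] := ifPn; [|have [w2|w2] := ifPn]; apply: eq_deg => e iew; rewrite K_mem.
- by rewrite (negbTE (incident_notin_induced iew (negbT (disjointFr disjoint_blocks w1)))).
- by case: ifP => // n2; rewrite agx ?(incident_notin_induced iew) // agy ?n2.
- by rewrite (negbTE (incident_notin_induced iew w2)) agx ?(incident_notin_induced iew).
Qed.

Let card_K : #|K| = #|F|.
Proof.
case: wx wy => _ cAx agx _ _ [_ cAy agy _ _].
have h1 : agree_off K Ax (induced P2) by move=> e n2; rewrite K_mem (negbTE n2).
have h2 : Ax :&: induced P2 = F :&: induced P2.
  apply/setP => e; rewrite !in_setI; case e2: (e \in induced P2); rewrite ?andbF //.
  by rewrite agx //; apply: contraTN e2 => /induced_block1.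
have K2 : K :&: induced P2 = Ay :&: induced P2.
  by apply/setP => e; rewrite !in_setI K_mem; case: (e \in induced P2); rewrite ?andbF.
by have := card_agree_off h1; have := card_agree_off agy; rewrite -/P2 K2 h2 cAx cAy; lia.
Qed.

Let bounded_forest_K : bounded_forest K.
Proof.
case: FF wx wy => _ acF dF [[sAx _ dAx] _ _ _ _] [[sAy _ dAy] _ _ _ _].
split; last by move=> v; rewrite deg_K; case: ifP => _; [|case: ifP].
  apply/subsetP => e; rewrite K_mem.
  by case: ifP => _; [apply: (subsetP sAy) | apply: (subsetP sAx)].
exact: acyclic_eq_conn acF card_K conn_K.
Qed.

Let deg_K_src : deg K x < f x.
Proof. by case: wx => _ _ _ _; rewrite deg_K component_refl. Qed.

Let deg_K_tgt : deg K y < f y.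
Proof.
case: wy => _ _ _ _.
by rewrite deg_K (disjointFl disjoint_blocks (component_refl _ _)) component_refl.
Qed.

Let conn_F_ends : conn F x y.
Proof.
apply: contraT => nF; have [sK acK dK] := bounded_forest_K.
have gK : g \notin K by apply: contra nF => gK; rewrite -conn_K conn_edge.
suff : bounded_forest (g |: K) by move/Fmax; rewrite cardsU1 gK card_K; lia.
split; first by rewrite subUset sub1set gU sK.
  apply: card_ncomp_acyclic; have := ncomp_delete (setU11 g K).
  rewrite setU1K // conn_K (negbTE nF) cardsU1 gK => h.
  by have := forest_card_ncomp acK; lia.
move=> v; rewrite degU1 //; case igv: (incident g v) => /=; last exact: dK.
by move: igv; rewrite /incident => /orP[]/eqP <-.
Qed.

(* Sep is the x-y path of F; A is F without its other edges at S, so it still joins x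
   and y, and Z is the set of vertices of S on the path. *)
Let Sep := [set e in F | ~~ conn (F :\ e) x y].
Let Z := S :&: [set v | [exists e in Sep, incident e v]].
Let S' := S :\: Z.
Let A := F :\: [set e in F | (e \in touching S) && (e \notin Sep)].

Let conn_A : conn A x y.
Proof.
case: FF => _ acF _; apply: conn_remove_nonbridges conn_F_ends => //.
  by apply/subsetP => e /setIdP[].
by move=> e /setIdP[eF /andP[_]]; rewrite inE eF negbK.
Qed.

Let A_sub_F : A \subset F. Proof. exact: subsetDl. Qed.

Let A_sub_F_off : A \subset F_off S'.
Proof.
apply/subsetP => e eA; have eF := subsetP A_sub_F e eA.
have inZ w : incident e w -> w \in S -> w \in Z.
  move=> iw wS; move: eA; rewrite !inE eF andbT /= negb_and negbK => /orP[nt|eS].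
    by move: nt; move: iw; rewrite /incident => /orP[]/eqP ->; rewrite wS ?orbT.
  by rewrite wS; apply/existsP; exists e; rewrite inE eF eS.
rewrite in_setD eF andbT [e \in touching _]inE negb_or !in_setD.
by apply/andP; split; apply/negP => /andP[/negP nz sS]; apply/nz/inZ;
  rewrite // /incident eqxx ?orbT.
Qed.

Let card_S'_lt : #|S'| < #|S|.
Proof.
have [e eA eS] : exists2 e, e \in A & e \notin F_off S.
  apply/exists_inP; apply: contraNT nxy; rewrite negb_exists_in => /forall_inP sA.
  by apply: conn_subset conn_A; apply/subsetP => e /sA; rewrite negbK.
have eF := subsetP A_sub_F e eA.
have et : e \in touching S by move: eS; rewrite in_setD eF andbT negbK.
have eSep : e \in Sep.
  apply: contraTT eA => nS; rewrite in_setD eF andbT negbK.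
  by apply/setIdP; split => //; apply/andP; split.
have [z zZ] : exists z, z \in Z.
  move: (et); rewrite inE => /orP[hs|hs]; [exists (src e) | exists (tgt e)];
  by rewrite !inE hs /=; apply/existsP; exists e; rewrite eSep /incident eqxx ?orbT.
rewrite -(cardsID Z S) -[X in X < _]add0n ltn_add2r card_gt0.
by apply/set0Pn; exists z; rewrite in_setI zZ andbT; case/setIP: zZ.
Qed.

(* For v in Z and an edge e of the path at v, trading e for g in K unsaturates v. *)
Section Exchange.
Variables (v : V) (e : E).
Hypotheses (vS : v \in S) (eSep : e \in Sep) (iev : incident e v).

Let Fv := g |: (K :\ e).
Let M := block S' v.

Let eF : e \in F. Proof. by case/setIdP: eSep. Qed.

Let e_touching : e \in touching S.
Proof. by rewrite inE; move: iev; rewrite /incident => /orP[]/eqP ->; rewrite vS ?orbT. Qed.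

Let e_notin_P1 : e \notin induced P1.
Proof. by apply: contraL e_touching; apply: induced_block_avoid. Qed.

Let e_notin_P2 : e \notin induced P2.
Proof. by apply: contraL e_touching; apply: induced_block_avoid. Qed.

Let eK : e \in K.
Proof. by rewrite agree_off_K // in_setU negb_or e_notin_P1 e_notin_P2. Qed.

Let connected_in_F1 : connected_in F P1. Proof. exact/connected_in_component/F_off_sub. Qed.
Let connected_in_F2 : connected_in F P2. Proof. exact/connected_in_component/F_off_sub. Qed.

Let K_bridge : ~~ conn (K :\ e) x y.
Proof.
have ag : agree_off (K :\ e) (F :\ e) (induced P1 :|: induced P2).
  by move=> h hn; rewrite !in_setD1 agree_off_K.
rewrite (conn_swap ag (connected_in_D1 e_notin_P1 connected_in_K1)
  (connected_in_D1 e_notin_P2 connected_in_K2) (connected_in_D1 e_notin_P1 connected_in_F1)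
  (connected_in_D1 e_notin_P2 connected_in_F2)).
by case/setIdP: eSep.
Qed.

Let conn_K_ends : conn K x y. Proof. by rewrite conn_K conn_F_ends. Qed.

Let gKe : g \notin K :\ e.
Proof. by apply: contra K_bridge; apply: conn_edge. Qed.

Let conn_Fv : conn Fv =2 conn F.
Proof. by move=> a b; rewrite (conn_exchange eK conn_K_ends K_bridge) conn_K. Qed.

Let card_Fv : #|Fv| = #|F|.
Proof. by rewrite cardsU1 gKe -card_K (cardsD1 e K) eK. Qed.

Let bounded_forest_Fv : bounded_forest Fv.
Proof.
case: FF bounded_forest_K => _ acF _ [sK _ dK].
have sKe : K :\ e \subset K by apply: subD1set.
split; [|exact: acyclic_eq_conn acF card_Fv conn_Fv|].
  by rewrite subUset sub1set gU (subset_trans sKe sK).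
move=> w; rewrite degU1 //.
case igw: (incident g w); last exact: leq_trans (deg_subset w sKe) (dK w).
rewrite add1n; move: igw; rewrite /incident => /orP[]/eqP <-.
  exact: leq_ltn_trans (deg_subset _ sKe) deg_K_src.
exact: leq_ltn_trans (deg_subset _ sKe) deg_K_tgt.
Qed.

Let deg_Fv : deg Fv v < f v.
Proof.
have igv : incident g v = false.
  by apply/norP; split; apply/eqP => ev; [move: xS | move: yS]; rewrite ev vS.
have vP1 : v \notin P1 by apply: block_avoid.
have vP2 : v \notin P2 by apply: block_avoid.
case: FF => _ _ dF; have := dF v.
have := deg_K v; rewrite (negbTE vP1) (negbTE vP2) (degD1 _ eK) iev => <-.
by rewrite degU1 // igv.
Qed.

Let eA : e \in A.
Proof. by rewrite in_setD eF andbT; apply/negP => /setIdP [_ /andP[_]]; rewrite eSep. Qed.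

Let conn_A_ends_e : conn A x (src e) && conn A x (tgt e).
Proof.
have nAe : ~~ conn (A :\ e) x y.
  by case/setIdP: eSep => _; apply: contra; apply/conn_subset/setSD.
have ce : conn A (src e) (tgt e) by apply: conn_edge.
case/orP: (conn_delete_split eA conn_A nAe) => /andP[/(conn_subset (subD1set _ _)) h1 _].
  by rewrite h1 (connect_trans h1 ce).
by rewrite h1 (connect_trans h1 _) // conn_sym.
Qed.

Let M_x : M = block S' x.
Proof.
apply: component_eq; rewrite conn_sym; case/andP: conn_A_ends_e => h1 h2.
by move: iev; rewrite /incident => /orP[]/eqP <-; apply: (conn_subset A_sub_F_off).
Qed.

Let M_y : M = block S' y.
Proof. by rewrite M_x; apply: component_eq; apply: (conn_subset A_sub_F_off conn_A). Qed.

Let P1_sub_M : P1 \subset M. Proof. by rewrite M_x; apply/blockS/subsetDl. Qed.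
Let P2_sub_M : P2 \subset M. Proof. by rewrite M_y; apply/blockS/subsetDl. Qed.

Let e_in_M : e \in induced M.
Proof.
by case/andP: conn_A_ends_e => h1 h2; rewrite M_x inE !inE !(conn_subset A_sub_F_off).
Qed.

Let g_in_M : g \in induced M.
Proof. by rewrite inE {1}M_x {1}M_y !component_refl. Qed.

Let connected_in_K_M : connected_in K M.
Proof.
move=> u w uM wM; have cF := connected_in_component (F_off_sub S') uM wM.
apply: (conn_agree_off (P1 := P1) (P2 := P2) _ _ _ cF).
- by move=> h hn; rewrite !in_setI agree_off_K.
- exact: connected_in_induced P1_sub_M connected_in_K1.
exact: connected_in_induced P2_sub_M connected_in_K2.
Qed.

Let connected_in_Fv : connected_in Fv M.
Proof.
move=> u w uM wM; set KM := K :&: induced M.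
have eKM : e \in KM by rewrite in_setI eK e_in_M.
have nKMe : ~~ conn (KM :\ e) x y.
  by apply: contra K_bridge; apply/conn_subset/setSD/subsetIl.
have sub : g |: (KM :\ e) \subset Fv :&: induced M.
  rewrite subUset sub1set in_setI setU11 g_in_M /=.
  by apply/subsetP => h; rewrite !inE => /andP[-> /andP[-> ->]]; rewrite orbT.
have xM : x \in M by rewrite M_x component_refl.
have yM : y \in M by rewrite M_y component_refl.
apply: (conn_subset sub).
by rewrite (conn_exchange eKM (connected_in_K_M xM yM) nKMe); apply: connected_in_K_M.
Qed.

Let agree_off_Fv : agree_off Fv F (induced M).
Proof.
move=> h hM.
have hg : h != g by apply: contraNneq hM => ->.
have he : h != e by apply: contraNneq hM => ->.
have h1 : h \notin induced P1 by apply: contra hM; apply: (subsetP (inducedS P1_sub_M)).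
have h2 : h \notin induced P2 by apply: contra hM; apply: (subsetP (inducedS P2_sub_M)).
by rewrite in_setU1 (negbTE hg) in_setD1 he /= agree_off_K // in_setU negb_or h1 h2.
Qed.

Lemma exchange_witness : witness S' v (g |: (K :\ e)).
Proof. by split. Qed.

End Exchange.

Let admissible_S' : admissible S'.
Proof.
case: admS => satS witS; split => [s /setDP[]|w wS']; first by move=> /satS.
have [wS|wS] := boolP (w \in S); last first.
  by have [Aw ww] := witS w wS; exists Aw; apply: witnessS ww; apply: subsetDl.
have /setIP[_] : w \in Z by move: wS'; rewrite in_setD wS andbT negbK.
rewrite inE => /exists_inP [e eSep iew].
by exists (g |: (K :\ e)); apply: exchange_witness.
Qed.

Lemma admissible_shrink : exists S', #|S'| < #|S| /\ admissible S'.
Proof. by exists S'; split; [exact: card_S'_lt | exact: admissible_S']. Qed.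

End BadEdge.

Lemma admissible_step S : admissible S ->
  blocks_closed S \/ exists S', #|S'| < #|S| /\ admissible S'.
Proof.
move=> admS; case: (boolP [forall g, [&& g \in U, src g \notin S & tgt g \notin S] ==>
   conn (F_off S) (src g) (tgt g)]) => [/forallP h|].
  by left => g gU xS yS; have := h g; rewrite gU xS yS.
rewrite negb_forall => /existsP [g]; rewrite negb_imply => /andP[/and3P[gU xS yS] nxy].
have [Ax wx] := admS.2 _ xS; have [Ay wy] := admS.2 _ yS.
by right; apply: admissible_shrink wx wy.
Qed.

Lemma admissible_closed : exists S, admissible S /\ blocks_closed S.
Proof.
suff: forall n S, #|S| < n -> admissible S -> exists S', admissible S' /\ blocks_closed S'.
  by move/(_ _ _ (ltnSn _) admissible_saturated).
elim => [|n IH] S // ltS admS.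
case: (admissible_step admS) => [cS|[S' [lt admS']]]; first by exists S.
by apply: IH admS'; apply: leq_trans lt _.
Qed.

End BoundedForest.

Lemma exists_max_bounded_forest U f : exists F, bounded_forest U f F /\
  forall A, bounded_forest U f A -> #|A| <= #|F|.
Proof.
pose bf A := [&& A \subset U, [forall e in A, ~~ conn (A :\ e) (src e) (tgt e)]
  & [forall v, deg A v <= f v]].
have bfP A : reflect (bounded_forest U f A) (bf A).
  apply: (iffP and3P) => [[sA /forall_inP acA /forallP dA]|[sA acA dA]]; first by split.
  by split => //; [apply/forall_inP | apply/forallP].
have bf0 : bf set0.
  by apply/bfP; split => [||v]; rewrite ?sub0set ?degE ?big1 // => e; rewrite inE.
case: (arg_maxnP (fun A : {set E} => #|A|) bf0) => F /bfP FF Fmax.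
by exists F; split => // A /bfP; apply: Fmax.
Qed.

Lemma tree_edges_across T B X : spanning_tree src tgt T -> 0 < #|V| ->
  {in T :\: X, forall e, conn B (src e) (tgt e)} -> ncomp B <= #|T :&: X| + 1.
Proof.
move=> [cT acT] V0 hB.
have := forest_card_ncomp acT; rewrite ncomp_connected // => cardT.
have := forest_card_ncomp (acyclicS (subsetDl T X) acT).
by have := leq_ncomp (conn_edges hB); have := cardsID X T; lia.
Qed.

Section Counting.
Hypothesis loopless_st : loopless src tgt.
Variables (k : nat) (T : 'I_(4 * k) -> {set E}) (U F : {set E}) (f : V -> nat) (S : {set V}).
Hypotheses (k_gt0 : 0 < k) (treeT : forall i, spanning_tree src tgt (T i))
  (disjT : forall i j, i != j -> [disjoint T i & T j]) (sTU : forall i, T i \subset U).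
Hypotheses (deg_U : forall v, deg U v <= k * (f v).+1) (f_ge3 : forall v, 3 <= f v).
Hypotheses (acF : acyclic F) (satS : forall s, s \in S -> f s <= deg F s)
  (closedS : blocks_closed U F S).

(* With t the number of edges of F at S, F - S has at least t + 2 components, so each
   of the 4k trees has at least t + 1 edges at S and the sum of f + 1 over S is at least
   4 (t + 1).  Saturation bounds the sum of f over S by t + |S| - 1, and f >= 3 makes
   the two bounds incompatible. *)
Lemma closed_saturated_forest_connected : connectedF src tgt F.
Proof.
move=> x0 y0; apply: contraT => nxy.
have V0 : 0 < #|V| by apply/card_gt0P; exists x0.
set t := #|F :&: touching S|.
have ncomp_off : t + 2 <= ncomp (F_off F S).
  have := forest_card_ncomp acF; have := ncomp_ge2 nxy.
  have := forest_card_ncomp (acyclicS (subsetDl F (touching S)) acF).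
  by have := cardsID (touching S) F; rewrite /F_off -/t; lia.
have tree_bound i : t.+1 <= \sum_(v in S) deg (T i) v.
  apply: leq_trans (sum_deg_ge loopless_st _ _).
  have : ncomp (F_off F S) <= #|T i :&: touching S| + 1.
    apply: tree_edges_across => // e /setDP[eT]; rewrite inE negb_or => /andP[h1 h2].
    exact: closedS (subsetP (sTU i) e eT) h1 h2.
  lia.
have sum_lb : 4 * k * t.+1 <= \sum_(v in S) k * (f v).+1.
  have deg_U_sum : \sum_(v in S) deg U v <= \sum_(v in S) k * (f v).+1.
    by apply: leq_sum => v _; apply: deg_U.
  apply: leq_trans deg_U_sum.
  have : \sum_(i < 4 * k) t.+1 <= \sum_(i < 4 * k) \sum_(v in S) deg (T i) v.
    by apply: leq_sum => i _; apply: tree_bound.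
  rewrite sum_nat_const card_ord exchange_big /= => h; apply: leq_trans h _.
  by apply: leq_sum => v _; apply: sum_deg_disjoint.
have sum_ub : \sum_(v in S) f v <= t + #|F :&: induced S|.
  by apply: leq_trans (sum_deg_le loopless_st F S); apply: leq_sum.
have sum_f3 : 3 * #|S| <= \sum_(v in S) f v.
  by rewrite mulnC -sum_nat_const; apply: leq_sum => v _.
have [S0|[s0 s0S]] := set_0Vmem S.
  by move: sum_lb; rewrite S0 big_set0; lia.
have forest_S : #|F :&: induced S| < #|S|.
  have := ncomp_induced s0S (subsetIr F (induced S)).
  have := forest_card_ncomp (acyclicS (subsetIl F (induced S)) acF).
  by have := cardsC S; lia.
move: sum_lb; rewrite -big_distrr /= [4 * _]mulnC -mulnA leq_pmul2l //.
have -> : \sum_(v in S) (f v).+1 = \sum_(v in S) f v + #|S|.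
  by rewrite -sum1_card -big_split /=; apply: eq_bigr => v _; rewrite addn1.
lia.
Qed.

End Counting.

Lemma connected_subgraph_deg_lt (k : nat) (T : 'I_(4 * k) -> {set E}) U :
  loopless src tgt -> 0 < k -> 1 < #|V| ->
  (forall i, spanning_tree src tgt (T i)) ->
  (forall i j, i != j -> [disjoint T i & T j]) -> (forall i, T i \subset U) ->
  exists C : {set E}, [/\ C \subset U, connectedF src tgt C & forall v, k * deg C v < deg U v].
Proof.
move=> ll k_gt0 nV treeT disjT sTU.
have deg_U_ge v : 4 * k <= deg U v.
  apply: leq_trans (sum_deg_disjoint v sTU disjT).
  have : \sum_(i < 4 * k) 1 <= \sum_(i < 4 * k) deg (T i) v.
    by apply: leq_sum => i _; apply: deg_connected_gt0 (treeT i).1 nV.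
  by rewrite sum_nat_const card_ord muln1.
(* f v is the largest integer with k * f v < deg U v *)
pose f v := (deg U v).-1 %/ k.
have f_lt v : k * f v < deg U v.
  by have := leq_divM (deg U v).-1 k; have := deg_U_ge v; rewrite /f mulnC; lia.
have f_ge v : deg U v <= k * (f v).+1.
  by have := ltn_ceil (deg U v).-1 k_gt0; have := deg_U_ge v; rewrite /f mulnC; lia.
have f_ge3 v : 3 <= f v by rewrite /f leq_divRL //; have := deg_U_ge v; lia.
have [F [FF Fmax]] := exists_max_bounded_forest U f.
have [S [[satS _] closedS]] := admissible_closed FF Fmax.
case: FF => sFU acF dF.
have cF := closed_saturated_forest_connected ll k_gt0 treeT disjT sTU f_ge f_ge3 acF satS closedS.
by exists F; split => // v; apply: leq_ltn_trans (f_lt v); rewrite leq_pmul2l.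
Qed.

Lemma edge_connected_bigcup q (C : 'I_q -> {set E}) :
  (forall j, connectedF src tgt (C j)) -> (forall i j, i != j -> [disjoint C i & C j]) ->
  edge_connected src tgt q (\bigcup_j C j).
Proof.
move=> cC dC X ltX.
have [j dj] : exists j, [disjoint C j & X].
  apply/existsP; apply: contraLR ltX; rewrite negb_exists -leqNgt => /forallP nd.
  have : \sum_(j < q) 1 <= \sum_(j < q) #|C j :&: X|.
    by apply: leq_sum => j _; rewrite card_gt0 setI_eq0.
  rewrite sum_nat_const card_ord muln1 => lb; apply: leq_trans lb _.
  apply: sum_card_disjoint => [j|i i' ii']; first exact: subsetIr.
  by apply/disjointWl/disjointWr/(dC _ _ ii'); apply: subsetIl.
move=> x y; apply: conn_subset (cC j x y); apply/subsetP => e ej.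
by rewrite in_setD (disjointFr dj ej) /=; apply/bigcupP; exists j.
Qed.

Lemma deg_bigcup_mul_lt q k (C U : 'I_q -> {set E}) v : 0 < q ->
  (forall j, k * deg (C j) v < deg (U j) v) ->
  (forall i j, i != j -> [disjoint U i & U j]) ->
  deg (\bigcup_j C j) v * k < deg [set: E] v.
Proof.
move=> q_gt0 hC dU.
have sum_C : \sum_j (k * deg (C j) v).+1 = k * \sum_j deg (C j) v + q.
  under eq_bigr do rewrite -addn1.
  by rewrite big_split /= sum_nat_const card_ord muln1 big_distrr.
have : \sum_j (k * deg (C j) v).+1 <= \sum_j deg (U j) v by apply: leq_sum.
rewrite sum_C.
have := sum_deg_disjoint v (fun j => subsetT (U j)) dU.
have : deg (\bigcup_j C j) v * k <= k * \sum_j deg (C j) v.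
  by rewrite mulnC leq_mul2l deg_bigcup orbT.
lia.
Qed.

End MultiGraph.

Theorem lemma7 (V E : finType) (src tgt : E -> V) (k q : nat) :
  loopless src tgt -> 0 < k -> 0 < q -> 1 < #|V| ->
  (exists T : 'I_(4 * k * q) -> {set E},
      (forall i, spanning_tree src tgt (T i)) /\
      (forall i j, i != j -> [disjoint T i & T j])) ->
  exists H : {set E},
    edge_connected src tgt q H /\
    forall v : V,
      ((deg src tgt H v)%:R < (deg src tgt [set: E] v)%:R / k%:R :> rat)%R.
Proof.
move=> ll k_gt0 q_gt0 nV [T [treeT disjT]].
pose U j := \bigcup_(l < 4 * k) T (mxvec_index l j).
have disjU : forall i j, i != j -> [disjoint U i & U j] := disjoint_bigcup_mxvec disjT.
have /fin_all_exists [C hC] j : exists C : {set E}, [/\ C \subset U j, connectedF src tgt C &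
    forall v, k * deg src tgt C v < deg src tgt (U j) v].
  apply: (connected_subgraph_deg_lt (T := fun l => T (mxvec_index l j))) => //.
  - by move=> l l' ll'; apply: disjT; rewrite mxvec_index_eq xpair_eqE (negbTE ll').
  by move=> l; apply: (bigcup_sup l).
exists (\bigcup_j C j); split.
  apply: edge_connected_bigcup => [j|i j ij]; first by case: (hC j).
  case: (hC i) (hC j) => sCi _ _ [sCj _ _].
  exact: disjointWl sCi (disjointWr sCj (disjU i j ij)).
move=> v; rewrite ltr_pdivlMr ?ltr0n // -natrM ltr_nat.
by apply: deg_bigcup_mul_lt q_gt0 _ disjU => j; case: (hC j).
Qed.
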